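(* Let $P$ be a group property preserved under quotients, let $k\ge2$ be an integer and $\rho:\mathbb{N}\to[0,1]$. Then for every $l$ divisible by $3$, $$\mathbb{P}(\Gamma\in\mathcal{B}(k,l,\rho)\text{ has }P)\ge\mathbb{P}(\Gamma'\in\mathcal{B}'(k,l,\rho)\text{ has }P).$$ In particular, if a random group in $\mathcal{B}'(k,l,\rho)$ has $P$ asymptotically almost surely (as $l\to\infty$ through multiples of $3$), then so does a random group in $\mathcal{B}(k,l,\rho)$.
   Context: Gromov binomial model $\mathcal{B}(k,l,\rho)$: $\Gamma=\langle\mathcal{A}\mid\mathcal{R}\rangle$ with $|\mathcal{A}|=k$, where each cyclically reduced word of length $l$ in $\mathcal{A}\cup\mathcal{A}^{-1}$ is put in $\mathcal{R}$ independently with probability $\rho(l)$. For $l$ divisible by $3$, $W'_{l/3}$ is the set of reduced words of length $l/3$ in $\mathcal{A}\cup\mathcal{A}^{-1}$ whose first and last letters lie in $\mathcal{A}$, and $W'_l$ is the set of words of length $l$ that are concatenations of three words of $W'_{l/3}$. Model $\mathcal{B}'(k,l,\rho)$: $\Gamma'=\langle\mathcal{A}\mid\mathcal{R}\rangle$ with $|\mathcal{A}|=k$, where each word of $W'_l$ is put in $\mathcal{R}$ independently with probability $\rho(l)$. A property is preserved under quotients if whenever a group has it, so does every quotient. *)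

From HB Require Import structures.
From mathcomp Require Import all_boot all_order all_algebra.
From mathcomp Require Import boolp reals.
Set Implicit Arguments. Unset Strict Implicit. Unset Printing Implicit Defensive.
Import Order.TTheory GRing.Theory Num.Theory.

Record gstruct := GStruct {
  gcar :> Type;
  geq : gcar -> gcar -> Prop;
  gmul : gcar -> gcar -> gcar;
  ginv : gcar -> gcar;
  gone : gcar }.
Arguments geq {g} _ _.
Arguments gmul {g} _ _.
Arguments ginv {g} _.

Definition is_group (G : gstruct) : Prop :=
  (forall x : G, geq x x) /\
  (forall x y : G, geq x y -> geq y x) /\
  (forall x y z : G, geq x y -> geq y z -> geq x z) /\
  (forall x x' y y' : G, geq x x' -> geq y y' -> geq (gmul x y) (gmul x' y')) /\
  (forall x x' : G, geq x x' -> geq (ginv x) (ginv x')) /\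
  (forall x y z : G, geq (gmul x (gmul y z)) (gmul (gmul x y) z)) /\
  (forall x, geq (gmul (gone G) x) x /\ geq (gmul x (gone G)) x) /\
  (forall x, geq (gmul (ginv x) x) (gone G) /\ geq (gmul x (ginv x)) (gone G)).

Definition is_hom (G H : gstruct) (f : G -> H) : Prop :=
  (forall x y : G, geq x y -> geq (f x) (f y)) /\
  (forall x y : G, geq (f (gmul x y)) (gmul (f x) (f y))).

Definition surj_hom (G H : gstruct) (f : G -> H) : Prop :=
  forall y : H, exists x : G, geq (f x) y.

Definition preserved_under_quotients (P : gstruct -> Prop) : Prop :=
  forall (G H : gstruct) (f : G -> H),
    is_group G -> is_group H -> is_hom f -> surj_hom f -> P G -> P H.

(* (i, true) is the generator a_i, (i, false) is a_i^{-1}. *)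
Definition letter (k : nat) := ('I_k * bool)%type.
Definition linv k (x : letter k) : letter k := (x.1, ~~ x.2).

Fixpoint reduced k (w : seq (letter k)) : bool :=
  match w with
  | x :: ((y :: _) as t) => (y != linv x) && reduced t
  | _ => true
  end.

Definition cyc_reduced k (w : seq (letter k)) : bool :=
  reduced w && (if w is x :: t then last x t != linv x else true).

Definition Wp1 k (w : seq (letter k)) : bool :=
  reduced w && (if w is x :: t then x.2 && (last x t).2 else true).

Definition Wl k l : {set l.-tuple (letter k)} :=
  [set w : l.-tuple (letter k) | cyc_reduced w].

Definition Wpl k l : {set l.-tuple (letter k)} :=
  [set w : l.-tuple (letter k) |
    [exists u : (l %/ 3).-tuple (letter k), exists v : (l %/ 3).-tuple (letter k),
     exists z : (l %/ 3).-tuple (letter k),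
       [&& Wp1 u, Wp1 v, Wp1 z & val w == u ++ v ++ z]]].

Inductive pres_eq k (Rel : seq (letter k) -> Prop) :
    seq (letter k) -> seq (letter k) -> Prop :=
| pe_refl w : pres_eq Rel w w
| pe_sym w1 w2 : pres_eq Rel w1 w2 -> pres_eq Rel w2 w1
| pe_trans w1 w2 w3 : pres_eq Rel w1 w2 -> pres_eq Rel w2 w3 -> pres_eq Rel w1 w3
| pe_cancel u x v : pres_eq Rel (u ++ x :: linv x :: v) (u ++ v)
| pe_rel u r v : Rel r -> pres_eq Rel (u ++ r ++ v) (u ++ v).

Definition presented k (Rel : seq (letter k) -> Prop) : gstruct :=
  @GStruct (seq (letter k)) (pres_eq Rel) (fun u v => u ++ v)
           (fun u => rev (map (@linv k) u)) [::].

Definition pres_of_set k l (Rs : {set l.-tuple (letter k)}) : gstruct :=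
  presented (fun w : seq (letter k) => exists2 r : l.-tuple (letter k), r \in Rs & val r = w).

(* Probability that the random group < A | R > has P, where each element of S
   is put in R independently with probability p. *)
Definition prob_has (R : realType) k l (S : {set l.-tuple (letter k)}) (p : R)
    (P : gstruct -> Prop) : R :=
  \sum_(Rs : {set l.-tuple (letter k)} | Rs \subset S)
     (p ^+ #|Rs| * (1 - p) ^+ #|S :\: Rs| * (asbool (P (pres_of_set Rs)))%:R)%R.

Definition probB (R : realType) k l (rho : nat -> R) P := prob_has (Wl k l) (rho l) P.
Definition probB' (R : realType) k l (rho : nat -> R) P := prob_has (Wpl k l) (rho l) P.

Set Warnings "-notation-overridden,-ambiguous-paths".
Set Implicit Arguments. Unset Strict Implicit.
From mathcomp Require Import all_boot all_order all_algebra.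
From mathcomp Require Import boolp reals ring.
Import Order.TTheory GRing.Theory Num.Theory.
Local Open Scope ring_scope.

(* W'_l is a subset of W_l, and adding relators to a presentation yields a
   quotient group, so "the presented group has P" is an upward-closed event
   on sets of relators.  Sampling every word of W_l independently with
   probability rho(l) and intersecting with W'_l gives exactly the sample of
   B'(k,l,rho); this coupling makes the event for B' a sub-event of the one
   for B. *)

Section PresentedGroup.
Variables (k : nat) (Rel : seq (letter k) -> Prop).
Local Notation E := (pres_eq Rel).
Local Notation winv u := (rev (map (@linv k) u)).

Lemma pres_eq_catr y x x' : E x x' -> E (x ++ y) (x' ++ y).
Proof.
elim=> [w|w1 w2 _ IH|w1 w2 w3 _ IH1 _ IH2|u a v|u r v Rr].
- exact: pe_refl.
- exact: pe_sym.
- exact: pe_trans IH1 IH2.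
- by have := pe_cancel Rel u a (v ++ y); rewrite -!catA.
- by have := pe_rel u (v ++ y) Rr; rewrite -!catA.
Qed.

Lemma pres_eq_catl y x x' : E x x' -> E (y ++ x) (y ++ x').
Proof.
elim=> [w|w1 w2 _ IH|w1 w2 w3 _ IH1 _ IH2|u a v|u r v Rr].
- exact: pe_refl.
- exact: pe_sym.
- exact: pe_trans IH1 IH2.
- by have := pe_cancel Rel (y ++ u) a v; rewrite -!catA.
- by have := pe_rel (y ++ u) v Rr; rewrite -!catA.
Qed.

Lemma linvK : involutive (@linv k).
Proof. by case=> i b; rewrite /linv /= negbK. Qed.

Lemma pres_eq_mulVw u : E (winv u ++ u) [::].
Proof.
elim: u => [|a u IH] /=; first exact: pe_refl.
rewrite rev_cons -cats1 -catA /=; apply: pe_trans IH.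
by have := pe_cancel Rel (winv u) (linv a) u; rewrite linvK.
Qed.

Lemma pres_eq_mulwV u : E (u ++ winv u) [::].
Proof.
elim: u => [|a u IH] /=; first exact: pe_refl.
rewrite rev_cons -cats1 catA; apply: pe_trans (pe_cancel Rel [::] a [::]).
by have := pres_eq_catl [:: a] (pres_eq_catr [:: linv a] IH).
Qed.

Lemma pres_eq_inv u u' : E u u' -> E (winv u) (winv u').
Proof.
move=> Eu; apply: (@pe_trans _ _ _ (winv u ++ u ++ winv u')).
  apply: pe_sym; apply: pe_trans (pres_eq_catl _ (pres_eq_catr _ Eu)) _.
  by have := pres_eq_catl (winv u) (pres_eq_mulwV u'); rewrite cats0.
by rewrite catA; exact: pres_eq_catr (pres_eq_mulVw u).
Qed.

Lemma presented_group : is_group (presented Rel).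
Proof.
split; first exact: pe_refl.
split; first exact: pe_sym.
split; first exact: pe_trans.
split; first by move=> x x' y y' Ex Ey; exact: pe_trans (pres_eq_catr y Ex) (pres_eq_catl x' Ey).
split; first exact: pres_eq_inv.
split; first by move=> x y z; rewrite /= catA; exact: pe_refl.
split; first by move=> x; rewrite /= cats0; split; exact: pe_refl.
by move=> x; split; [exact: pres_eq_mulVw | exact: pres_eq_mulwV].
Qed.

End PresentedGroup.

Lemma pres_eq_sub k (R1 R2 : seq (letter k) -> Prop) x y :
  (forall w, R1 w -> R2 w) -> pres_eq R1 x y -> pres_eq R2 x y.
Proof.
move=> R12; elim=> [w|w1 w2 _ IH|w1 w2 w3 _ IH1 _ IH2|u a v|u r v Rr].
- exact: pe_refl.
- exact: pe_sym.
- exact: pe_trans IH1 IH2.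
- exact: pe_cancel.
- exact: pe_rel (R12 _ Rr).
Qed.

Lemma presented_quotient (P : gstruct -> Prop) k (R1 R2 : seq (letter k) -> Prop) :
  preserved_under_quotients P -> (forall w, R1 w -> R2 w) ->
  P (presented R1) -> P (presented R2).
Proof.
move=> PQ R12; apply: (PQ (presented R1) (presented R2) id); try exact: presented_group.
- by split=> x y /=; [exact: pres_eq_sub | exact: pe_refl].
- by move=> y; exists y; exact: pe_refl.
Qed.

Lemma pres_of_set_sub (P : gstruct -> Prop) k l (A B : {set l.-tuple (letter k)}) :
  preserved_under_quotients P -> A \subset B ->
  P (pres_of_set A) -> P (pres_of_set B).
Proof.
move=> PQ /subsetP AB; apply: presented_quotient PQ _.
by move=> w [r rA <-]; exists r; first exact: AB.
Qed.

Section Words.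
Variable k : nat.

Lemma reduced_cat (x : letter k) s t : reduced (x :: s) -> reduced t ->
  (if t is y :: _ then y != linv (last x s) else true) -> reduced (x :: s ++ t).
Proof.
elim: s x => [|y s IH] x /=; first by case: t => [|z t] //= _ -> ->.
by case/andP=> -> /= rs rt; exact: IH.
Qed.

Lemma positive_neq_linv (a b : letter k) : a.2 -> b.2 -> a != linv b.
Proof. by move=> a2 b2; apply/eqP=> ab; move: a2; rewrite ab /= b2. Qed.

Lemma Wp1_cat (s t : seq (letter k)) : Wp1 s -> Wp1 t -> Wp1 (s ++ t).
Proof.
case: s => [|x s] //; case: t => [|y t]; first by rewrite cats0.
case/andP=> rs /andP[x2 s2] /andP[rt /andP[y2 t2]].
rewrite /Wp1 /= x2 last_cat /= t2 andbT.
by apply: reduced_cat => //=; exact: positive_neq_linv.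
Qed.

Lemma Wp1_cyc_reduced (w : seq (letter k)) : Wp1 w -> cyc_reduced w.
Proof.
case: w => [|x t] //; case/andP=> rw /andP[x2 t2].
by rewrite /cyc_reduced rw; exact: positive_neq_linv.
Qed.

Lemma Wpl_subset l : Wpl k l \subset Wl k l.
Proof.
apply/subsetP=> w; rewrite !inE.
case/existsP=> u /existsP[v /existsP[z /and4P[Wu Wv Wz /eqP ->]]].
by apply/Wp1_cyc_reduced/Wp1_cat/Wp1_cat.
Qed.

End Words.

Section SubsetWeights.
Variables (R : comNzRingType) (T : finType) (p : R).

Definition subset_weight (U A : {set T}) : R := p ^+ #|A| * (1 - p) ^+ #|U :\: A|.

Lemma sum_subsetD1 (U : {set T}) x (F : {set T} -> R) : x \in U ->
  \sum_(A : {set T} | A \subset U) F A =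
  \sum_(A : {set T} | A \subset U :\ x) (F A + F (x |: A)).
Proof.
move=> xU; rewrite big_split /= (bigID (fun A : {set T} => x \in A)) /= addrC.
congr (_ + _); first by apply: eq_bigl => A; rewrite subsetD1.
rewrite (reindex_onto (fun A => x |: A) (fun A => A :\ x)) /=; last first.
  by move=> A /andP[_ xA]; rewrite setD1K.
apply: eq_bigl => A; rewrite setU11 andbT subsetD1.
have [xA|xA] /= := boolP (x \in A).
  by rewrite andbF; apply/negbTE/andP=> -[_ /eqP eA]; move: xA; rewrite -eA !inE eqxx.
by rewrite setU1K // eqxx andbT subUset sub1set xU andbT.
Qed.

Lemma subset_weightD1 (U A : {set T}) x : x \in U -> x \notin A ->
  subset_weight U A + subset_weight U (x |: A) = subset_weight (U :\ x) A.
Proof.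
move=> xU xA; rewrite /subset_weight cardsU1 xA add1n exprS.
rewrite setDDl setUC -setDDl (cardsD1 x (U :\: A)) !inE xU xA add1n exprS.
rewrite setDDl setUC -setDDl; ring.
Qed.

Lemma sum_subset_weight_setI (S U : {set T}) (f : {set T} -> R) : S \subset U ->
  \sum_(A : {set T} | A \subset U) subset_weight U A * f (A :&: S) =
  \sum_(B : {set T} | B \subset S) subset_weight S B * f B.
Proof.
move=> SU; move En: #|U :\: S| => n; elim: n U En SU => [|n IH] U En SU.
  have -> : U = S by apply/eqP; rewrite eqEsubset SU -setD_eq0 -cards_eq0 En.
  by apply: eq_bigr => A /setIidPl->.
have /card_gt0P[x] : (0 < #|U :\: S|)%N by rewrite En.
rewrite inE => /andP[xS xU].
rewrite (sum_subsetD1 _ xU) -(IH (U :\ x)); last 2 first.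
- by move: En; rewrite (cardsD1 x) !inE xS xU setDDl setUC -setDDl => -[].
- by rewrite subsetD1 SU.
apply: eq_bigr => A; rewrite subsetD1 => /andP[_ xA].
have -> : (x |: A) :&: S = A :&: S by rewrite setIUl disjoint_setI0 ?set0U ?disjoints1.
by rewrite -mulrDl subset_weightD1.
Qed.

End SubsetWeights.

Lemma prob_has_subset (R : realType) k l (S U : {set l.-tuple (letter k)}) (p : R)
    (P : gstruct -> Prop) :
  preserved_under_quotients P -> 0 <= p <= 1 -> S \subset U ->
  prob_has S p P <= prob_has U p P.
Proof.
move=> PQ /andP[p0 p1] SU; rewrite /prob_has.
set f := fun A : {set l.-tuple (letter k)} => (asbool (P (pres_of_set A)))%:R : R.
have := sum_subset_weight_setI p f SU; rewrite /subset_weight /f => <-.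
apply: ler_sum => A _; apply: ler_wpM2l.
  by rewrite mulr_ge0 // exprn_ge0 // subr_ge0.
rewrite ler_nat; case: asboolP => //= PA.
by rewrite asboolT //; exact: pres_of_set_sub PQ (subsetIl A S) PA.
Qed.

Theorem proposition4p6 (R : realType) (P : gstruct -> Prop) (k : nat) (rho : nat -> R) :
  preserved_under_quotients P -> (2 <= k)%N ->
  (forall n, 0 <= rho n <= 1) ->
  (forall l, (3 %| l)%N -> probB' k l rho P <= probB k l rho P) /\
  ((forall eps : R, 0 < eps -> exists N : nat, forall l, (N <= l)%N -> (3 %| l)%N ->
       1 - eps <= probB' k l rho P) ->
   (forall eps : R, 0 < eps -> exists N : nat, forall l, (N <= l)%N -> (3 %| l)%N ->
       1 - eps <= probB k l rho P)).
Proof.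
move=> PQ _ rho01.
have B'_le_B l : probB' k l rho P <= probB k l rho P.
  exact: prob_has_subset PQ (rho01 l) (Wpl_subset k l).
split=> [l _|aas' eps eps_gt0]; first exact: B'_le_B.
have [N HN] := aas' eps eps_gt0; exists N => l Nl l3.
exact: le_trans (HN l Nl l3) (B'_le_B l).
Qed.
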